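(* Let $a\geq 3$ and $m\geq 2a^2-a+2$ be integers, and suppose $[C(m,a)]$ is colored with red and blue so that there is no monochromatic solution of $L(m,a)$ in $[C(m,a)]$, with both $a-2$ and $a-1$ red. If $d$ is an integer with $a\mid d$ and $m-1\leq d\leq 2m-2$, then $d/a$ is blue.
   Context: For integers $m\geq 3$, $a\geq 1$, $L(m,a)$ denotes the equation $x_1+x_2+\cdots+x_{m-1}=a x_m$. For a positive integer $n$, $[n]=\{1,\dots,n\}$. A solution of $L(m,a)$ in $[n]$ is an $m$-tuple $(x_1,\dots,x_m)\in[n]^m$ (entries not necessarily distinct) satisfying the equation; given a 2-coloring of $[n]$, it is monochromatic if all $x_i$ have the same color. $C(m,a)$ denotes $\left\lceil \frac{m-1}{a}\left\lceil \frac{m-1}{a}\right\rceil\right\rceil$. *)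

From mathcomp Require Import all_boot.
Set Implicit Arguments. Unset Strict Implicit. Unset Printing Implicit Defensive.

Definition ceil_div (p q : nat) : nat := (p + q - 1) %/ q.

(* C(m,a) = ceil( (m-1)/a * ceil((m-1)/a) ) = ceil( (m-1) * ceil((m-1)/a) / a ) *)
Definition Cma (m a : nat) : nat := ceil_div ((m - 1) * ceil_div (m - 1) a) a.

(* A solution of L(m,a) in [n]: an m-tuple (x_1,...,x_{m-1}, x_m), represented
   as xs : 'I_(m-1) -> nat for x_1..x_{m-1} and y for x_m, all in [1,n],
   with x_1 + ... + x_{m-1} = a * x_m. *)
Definition is_solution (m : nat) (a n : nat) (xs : 'I_(m - 1) -> nat) (y : nat) : Prop :=
  (forall i, 1 <= xs i <= n) /\ 1 <= y <= n /\ \sum_(i < m - 1) xs i = a * y.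

(* A 2-coloring of [n] is col : nat -> bool (true = red, false = blue);
   only values on [n] are relevant. *)
Definition monochromatic (col : nat -> bool) {m : nat} (xs : 'I_(m - 1) -> nat) (y : nat) : Prop :=
  forall i, col (xs i) = col y.

Definition no_mono_solution (col : nat -> bool) (m a n : nat) : Prop :=
  forall (xs : 'I_(m - 1) -> nat) (y : nat), @is_solution m a n xs y -> ~ monochromatic col xs y.

From mathcomp Require Import all_boot.
From mathcomp Require Import zify.

Set Implicit Arguments. Unset Strict Implicit. Unset Printing Implicit Defensive.

(* Write N = m - 1 for the number of summands on the left of L(m,a).

   Combinatorial tool (no_mono_window): j summands taking the consecutive
   values x, x + 1 and N - j summands equal to v realise every sum
   j*x + e + (N - j)*v with 0 <= e <= j; such a family cannot be
   monochromatic together with y when this sum equals a*y.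

   Since a - 2 and a - 1 are red, this makes every b with
   N(a-2) <= a*b <= N(a-1) blue (blue_interval).  Let U be the largest such
   b.  For 1 <= v <= a/2, dividing a*U - (N - (a-v))*v by a - v gives a
   quotient q such that q and q + 1 lie in the same interval
   (window_bounds, a purely arithmetic statement proved first); so v blue
   would give a blue solution with x_m = U, and every such v is red
   (small_red).  In particular 1 and 2 are red (2 = a - 1 when a = 3).
   Finally, if d/a were red, 2N - d ones and d - N twos would give a red
   solution with x_m = d/a (quotient_blue). *)

(* The arithmetic of window_bounds in coordinates free of truncated
   subtraction: a = i + k + 2, v = k + 1, a - v = i + 1, N = w + i + 1.
   If q*(a-v) + r + (N-(a-v))*v = a*U with r < a - v and a*U > N(a-1) - a,
   then a*q >= N(a-2); the case k = 0 (v = 1) needs N >= a. *)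
Lemma quotient_lower_bound (w i k U q r : nat) : k <= i -> k < w -> r <= i ->
  (w + i + 1) * (i + k + 1) < (i + k + 2) * U + (i + k + 2) ->
  q * (i + 1) + r + w * (k + 1) = (i + k + 2) * U ->
  (w + i + 1) * (i + k) <= (i + k + 2) * q.
Proof.
move=> ki kw ri hU hq.
have qj : (w + i + 1) * i + (i + 1) * k <= q * (i + 1) + (i + k) by nia.
have key : (i + 1) * ((w + i + 1) * (i + k)) <= (i + 1) * ((i + k + 2) * q).
  have := leq_mul (leqnn (i + k + 2)) qj.
  by case: k ki kw {hU hq} qj => [|k] ki kw qj; nia.
by move: key; rewrite leq_pmul2l ?addn1.
Qed.

(* Under the same equation, a*U <= N(a-1) and N >= a^2 force q < U:
   otherwise U + (a - v) >= N, i.e. a*(a-v) >= N. *)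
Lemma quotient_upper_bound (w i k U q r : nat) :
  (i + k + 2) * (i + k + 2) <= w + i + 1 ->
  (i + k + 2) * U <= (w + i + 1) * (i + k + 1) ->
  q * (i + 1) + r + w * (k + 1) = (i + k + 2) * U -> q < U.
Proof.
move=> aN hU hq; rewrite ltnNge; apply/negP => Uq.
have : U * (i + 1) <= q * (i + 1) by rewrite leq_mul2r Uq orbT.
have : w <= U + i by nia.
nia.
Qed.

Lemma window_bounds (N a v U q r : nat) :
  0 < v -> 2 * v <= a -> a * a <= N ->
  a * U <= N * (a - 1) < a * U + a ->
  r < a - v -> q * (a - v) + r + (N - (a - v)) * v = a * U ->
  N * (a - 2) <= a * q /\ a * q.+1 <= N * (a - 1).
Proof.
case: v => // k _ va aN /andP[hU1 hU2] hr hq.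
have [i Ea] : exists i, a = i + k + 2 by exists (a - k - 2); lia.
have [w EN] : exists w, N = w + i + 1 by exists (N - i - 1); nia.
subst a N.
have Ej : i + k + 2 - k.+1 = i + 1 by lia.
have E1 : i + k + 2 - 1 = i + k + 1 by lia.
have E2 : i + k + 2 - 2 = i + k by lia.
have Ew : w + i + 1 - (i + 1) = w by lia.
rewrite Ej Ew in hr hq; rewrite -(addn1 k) in hq; rewrite E1 E2 in hU1 hU2 *.
split; first by apply: quotient_lower_bound hU2 hq; lia.
apply: leq_trans (hU1).
by rewrite leq_mul2l (quotient_upper_bound aN hU1 hq) orbT.
Qed.

Section Coloring.

Variables (col : nat -> bool) (m a n : nat).
Hypothesis no_mono : no_mono_solution col m a n.

Lemma no_mono_seq (s : seq nat) (y : nat) :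
  size s = m - 1 -> 1 <= y <= n -> sumn s = a * y ->
  {in s, forall x, 1 <= x <= n /\ col x = col y} -> False.
Proof.
move=> size_s y_range sum_s s_ok.
have nth_ok (i : 'I_(m - 1)) : 1 <= nth 0 s i <= n /\ col (nth 0 s i) = col y.
  by apply: s_ok; rewrite mem_nth // size_s.
apply: (no_mono (xs := fun i => nth 0 s i) (y := y)); last by move=> i; case: (nth_ok i).
split; [by move=> i; case: (nth_ok i) | split => //].
by rewrite -sum_s sumnE (big_nth 0) size_s big_mkord.
Qed.

Lemma no_mono_window (j e x v y : nat) :
  j <= m - 1 -> e <= j -> 0 < x -> x.+1 <= n -> 1 <= v <= n -> 1 <= y <= n ->
  col x = col y -> col x.+1 = col y -> col v = col y ->
  j * x + e + (m - 1 - j) * v = a * y -> False.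
Proof.
move=> j_le e_le x_pos x1_le v_range y_range col_x col_x1 col_v sum_eq.
apply: (no_mono_seq (s := nseq e x.+1 ++ nseq (j - e) x ++ nseq (m - 1 - j) v)) y_range _ _.
- by rewrite !size_cat !size_nseq; lia.
- by rewrite !sumn_cat !sumn_nseq -sum_eq; nia.
move=> z; rewrite !mem_cat => /orP[|/orP[]] /nseqP[-> _]; split => //; lia.
Qed.

Hypotheses (a_ge3 : 3 <= a) (a2_le_N : a * a <= m - 1).
Hypothesis n_large : (m - 1) * (a - 1) <= a * n.
Hypotheses (red_am2 : col (a - 2) = true) (red_am1 : col (a - 1) = true).

Lemma a_le_N : a <= m - 1.
Proof. exact: leq_trans (leq_pmull a (ltnW (ltnW a_ge3))) a2_le_N. Qed.

Lemma in_range (b : nat) : 0 < b -> a * b <= (m - 1) * (a - 1) -> 1 <= b <= n.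
Proof. by move=> b_pos ab_le; rewrite b_pos -(leq_pmul2l (ltnW (ltnW a_ge3))); lia. Qed.

(* Every b with N(a-2) <= a*b <= N(a-1) is blue: otherwise a red solution
   with x_m = b uses only the red values a - 2 and a - 1. *)
Lemma blue_interval (b : nat) :
  (m - 1) * (a - 2) <= a * b <= (m - 1) * (a - 1) -> col b = false.
Proof.
move=> /andP[lo hi]; case col_b: (col b) => //; exfalso.
have b_pos : 0 < b by nia.
have am1 : (a - 2).+1 = a - 1 by lia.
have split_top : (m - 1) * (a - 1) = (m - 1) + (m - 1) * (a - 2) by rewrite -am1 mulnS.
have am1_range : 1 <= a - 1 <= n by apply: in_range; nia.
have am2_range : 1 <= a - 2 <= n by apply: in_range; nia.
apply: (@no_mono_window (m - 1) (a * b - (m - 1) * (a - 2)) (a - 2) (a - 2) b).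
- by [].
- lia.
- lia.
- by rewrite am1; case/andP: am1_range.
- exact: am2_range.
- exact: in_range.
- by rewrite col_b.
- by rewrite am1 col_b.
- by rewrite col_b.
- by rewrite subnn mul0n addn0 addnC subnK.
Qed.

Definition top_blue : nat := (m - 1) * (a - 1) %/ a.

Lemma top_blue_bounds : a * top_blue <= (m - 1) * (a - 1) < a * top_blue + a.
Proof.
have a_pos : 0 < a by lia.
have := divn_eq ((m - 1) * (a - 1)) a; have := ltn_pmod ((m - 1) * (a - 1)) a_pos.
rewrite /top_blue; move: (_ %/ a) (_ %% a) => q r; lia.
Qed.

Lemma top_blue_blue : col top_blue = false.
Proof.
apply: blue_interval; have /andP[below_top above_prev] := top_blue_bounds.
rewrite below_top andbT; nia.
Qed.

(* Every v with 1 <= v <= a/2 is red: otherwise the window lemma with the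
   blue values q, q + 1 (from window_bounds), v and x_m = top_blue applies. *)
Lemma small_red (v : nat) : 0 < v -> 2 * v <= a -> col v = true.
Proof.
move=> v_pos v_le; case col_v: (col v) => //; exfalso.
set U := top_blue; have U_bounds := top_blue_bounds.
set T := a * U - (m - 1 - (a - v)) * v.
have T_eq : T %/ (a - v) * (a - v) + T %% (a - v) + (m - 1 - (a - v)) * v = a * U.
  rewrite -divn_eq /T subnK //; nia.
have av_pos : 0 < a - v by lia.
have [lo hi] := window_bounds v_pos v_le a2_le_N U_bounds (ltn_pmod T av_pos) T_eq.
set q := T %/ (a - v) in lo hi T_eq; set r := T %% (a - v) in T_eq.
have col_q : col q = false.
  by apply: blue_interval; rewrite lo /=; apply: leq_trans _ (hi); rewrite leq_mul2l leqnSn orbT.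
have col_q1 : col q.+1 = false.
  by apply: blue_interval; rewrite hi andbT; apply: leq_trans (lo) _; rewrite leq_mul2l leqnSn orbT.
have col_U : col U = false := top_blue_blue.
apply: (@no_mono_window (a - v) r q v U).
- by apply: leq_trans a_le_N; rewrite leq_subr.
- exact: ltnW (ltn_pmod T av_pos).
- rewrite lt0n; apply/eqP => q0; move: lo; rewrite q0 muln0 leqn0 muln_eq0; lia.
- by case/andP: (in_range (ltn0Sn q) hi).
- by apply: in_range => //; apply: leq_mul; lia.
- apply: in_range; last by case/andP: U_bounds.
  have a_le_top : a <= (m - 1) * (a - 1) by apply: leq_trans a_le_N (leq_pmulr _ _); lia.
  rewrite lt0n; apply/eqP => U0; move: U_bounds; rewrite -/U U0 muln0 add0n; lia.
- by rewrite col_q col_U.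
- by rewrite col_q1 col_U.
- by rewrite col_v col_U.
- by rewrite mulnC.
Qed.

(* The conclusion: if d/a were red, 2N - d ones and d - N twos (both red by
   small_red, or 2 = a - 1 when a = 3) would form a red solution with
   x_m = d/a. *)
Lemma quotient_blue (d : nat) :
  a %| d -> m - 1 <= d <= 2 * (m - 1) -> col (d %/ a) = false.
Proof.
move=> a_dvd_d /andP[d_lo d_hi]; case col_k: (col (d %/ a)) => //; exfalso.
have red1 : col 1 = true by apply: small_red; lia.
have red2 : col 2 = true.
  have [a3 | a_ne3] := eqVneq a 3; first by move: red_am1; rewrite a3.
  by apply: small_red => //; lia.
have two_range : 1 <= 2 <= n by apply: in_range => //; apply: leq_mul; lia.
have d_eq : a * (d %/ a) = d by rewrite mulnC divnK.
apply: (@no_mono_window (m - 1) (d - (m - 1)) 1 1 (d %/ a)).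
- by [].
- lia.
- by [].
- by case/andP: two_range.
- by rewrite /= (leq_trans _ (proj2 (andP two_range))).
- apply: in_range; last by rewrite d_eq; apply: leq_trans d_hi _; rewrite mulnC; apply: leq_mul => //; lia.
  by rewrite lt0n; apply/eqP => k0; move: d_eq; rewrite k0 muln0; have := a_le_N; lia.
- by rewrite red1.
- by rewrite red2.
- by rewrite red1.
- by rewrite d_eq subnn mul0n addn0 muln1 subnKC.
Qed.

End Coloring.

Lemma ceil_div_ge (p q : nat) : 0 < q -> p <= q * ceil_div p q.
Proof.
move=> q_gt0; have := ltn_ceil (p + q - 1) q_gt0.
rewrite /ceil_div mulSn mulnC; lia.
Qed.

(* C(m,a) is large enough for the whole blue interval to lie in [C(m,a)]:
   a * C(m,a) >= N * ceil(N/a) >= N(a-1), since ceil(N/a) >= a when N >= a^2. *)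
Lemma Cma_large (m a : nat) :
  0 < a -> a * a <= m - 1 -> (m - 1) * (a - 1) <= a * Cma m a.
Proof.
move=> a_pos a2_le_N; set t := ceil_div (m - 1) a.
have t_ge : a <= t.
  by rewrite -(leq_pmul2l a_pos); apply: leq_trans a2_le_N (ceil_div_ge _ a_pos).
apply: leq_trans (ceil_div_ge _ a_pos); apply: leq_mul => //; lia.
Qed.

Theorem lemma9 (m a : nat) (col : nat -> bool) :
  3 <= a ->
  2 * a ^ 2 - a + 2 <= m ->
  no_mono_solution col m a (Cma m a) ->
  col (a - 2) = true -> col (a - 1) = true ->
  forall d : nat, a %| d -> m - 1 <= d <= 2 * m - 2 ->
  col (d %/ a) = false.
Proof.
move=> a_ge3 m_large no_mono red_am2 red_am1 d a_dvd_d d_range.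
have a2_le_N : a * a <= m - 1.
  by have := leq_pmull a (ltnW (ltnW a_ge3)); rewrite expnS expn1 in m_large; lia.
have n_large := Cma_large (ltnW (ltnW a_ge3)) a2_le_N.
apply: (quotient_blue no_mono a_ge3 a2_le_N n_large red_am2 red_am1 a_dvd_d); lia.
Qed.
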